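(* Let $\mathcal{X}=\{x_1,\dots,x_n\}$ and $\mathcal{Y}=\{y_1,\dots,y_m\}$ be the entity sets of a source KG and a target KG, with triplet sets $\mathcal{T}^{\mathcal{X}}$ and $\mathcal{T}^{\mathcal{Y}}$ respectively (each already augmented with reverse triplets as described in the context). Let $\mathbf{x}_1,\dots,\mathbf{x}_n,\mathbf{y}_1,\dots,\mathbf{y}_m\in\mathbb{R}^d$ be entity embeddings and suppose that, in each KG separately, every entity $e$ with $\mathcal{T}_e\neq\emptyset$ satisfies the TransE stationarity relation $$\mathbf{e}=\frac{1}{|\mathcal{T}_e|}\sum_{(e,r,o)\in\mathcal{T}_e}\Big(\mathbf{o}-\frac{1}{|\mathcal{T}_r|}\sum_{(s',r,o')\in\mathcal{T}_r}(\mathbf{o}'-\mathbf{s}')\Big),$$ where the triplet sets are taken within that KG. Define $\Lambda=(\lambda_{i,j})\in\mathbb{R}^{n\times n}$ by $$\lambda_{i,j}=\frac{1}{|\mathcal{T}_{x_i}|}\Big(|R(x_i,x_j)|+\sum_{r\in R}\frac{|\mathcal{T}_{x_i,r}|}{|\mathcal{T}_r|}\big(|\mathcal{T}_{x_j,r}|-|\mathcal{T}_{x_j,r^{-1}}|\big)\Big)$$ (computed in the source KG), and $\Lambda'=(\lambda'_{i,j})\in\mathbb{R}^{m\times m}$ analogously in the target KG. Then $\mathbf{x}_i=\sum_{k=1}^n\lambda_{i,k}\mathbf{x}_k$ for all $i$, $\mathbf{y}_j=\sum_{l=1}^m\lambda'_{j,l}\mathbf{y}_l$ for all $j$, and the pairwise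 similarity matrix $\Omega=(\omega_{i,j})\in\mathbb{R}^{n\times m}$, $\omega_{i,j}=\mathbf{x}_i\cdot\mathbf{y}_j$, is a fixpoint of the map $\Omega\mapsto\Lambda\Omega(\Lambda')^\top$, i.e. $\Lambda\Omega(\Lambda')^\top=\Omega$.
   Context: A knowledge graph (KG) is a set of triplets $(s,r,o)$ (subject entity, relation, object entity). For each triplet $(s,r,o)$ a reverse triplet $(o,r^{-1},s)$ is added, with $r^{-1}$ a new relation symbol; $R$ denotes the set of all relations (including reverse ones). Notation: $\mathcal{T}_e$ is the set of triplets with $e$ as subject; $\mathcal{T}_r$ the set of triplets with relation $r$; $\mathcal{T}_{e,r}$ the set of triplets with subject $e$ and relation $r$; $R(x_i,x_j)$ the set of relations $r$ with $(x_i,r,x_j)$ a triplet. All sets of triplets involved are assumed nonempty where they appear in a denominator. The stationarity relation above is the form the entity embeddings take at a stationary point of the TransE-based entity alignment loss (translational loss $\sum\|\mathbf{s}+\mathbf{r}-\mathbf{o}\|_2^2$ plus alignment loss plus unit-norm constraints), after eliminating relation embeddings. *)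

From HB Require Import structures.
From mathcomp Require Import all_boot all_order all_algebra.
Set Implicit Arguments. Unset Strict Implicit. Unset Printing Implicit Defensive.
Import Order.TTheory GRing.Theory Num.Theory.
Local Open Scope ring_scope.

(* A knowledge graph over entities E with base relations B.
   The full relation set is  rel B := B * bool, where (r, false) is the
   original relation r and (r, true) is its reverse r^{-1}. *)
Definition rel (B : finType) := (B * bool)%type.
Definition inv {B : finType} (r : rel B) : rel B := (r.1, ~~ r.2).

Definition augment {E B : finType} (T0 : {set E * B * E}) : {set E * rel B * E} :=
  [set t : E * rel B * E |
     let: (s, (r, b), o) := t in
     if b then (o, r, s) \in T0 else (s, r, o) \in T0].

Section KG.
Variables (E B : finType) (T : {set E * rel B * E}).

Definition T_e (e : E) := [set t in T | t.1.1 == e].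
Definition T_r (r : rel B) := [set t in T | t.1.2 == r].
Definition T_er (e : E) (r : rel B) := [set t in T | (t.1.1 == e) && (t.1.2 == r)].
Definition Rset (ei ej : E) := [set r : rel B | (ei, r, ej) \in T].
End KG.

Definition lambda_mx (R : realFieldType) (n : nat) (B : finType)
    (T : {set 'I_n * rel B * 'I_n}) : 'M[R]_n :=
  \matrix_(i < n, j < n)
    ((#|T_e T i|%:R)^-1 *
      (#|Rset T i j|%:R +
       \sum_(r : rel B) (#|T_er T i r|%:R / #|T_r T r|%:R) *
                        (#|T_er T j r|%:R - #|T_er T j (inv r)|%:R))).

(* TransE stationarity: row e of X is the embedding of entity e. *)
Definition stationary (R : realFieldType) (n d : nat) (B : finType)
    (T : {set 'I_n * rel B * 'I_n}) (X : 'M[R]_(n, d)) : Prop :=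
  forall e : 'I_n, T_e T e != set0 ->
    row e X =
      (#|T_e T e|%:R)^-1 *:
        \sum_(t in T_e T e)
          (row t.2 X -
           (#|T_r T t.1.2|%:R)^-1 *:
             \sum_(t' in T_r T t.1.2) (row t'.2 X - row t'.1.1 X)).

Definition sim_mx (R : realFieldType) (n m d : nat)
    (X : 'M[R]_(n, d)) (Y : 'M[R]_(m, d)) : 'M[R]_(n, m) :=
  \matrix_(i < n, j < m) \sum_(k < d) X i k * Y j k.

From Pilot Require Import Defs.
From HB Require Import structures.
From mathcomp Require Import all_boot all_order all_algebra.
Import Order.TTheory GRing.Theory Num.Theory.
Local Open Scope ring_scope.

(* The stationarity relation of entity e is a sum over the triplets of T_e,
   and each inner relation average is a sum over the triplets of T_r.  Both
   sums are regrouped by the entity each summand refers to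
   ([sum_by_fibres]); the fibres that appear are counted by |R(e,k)|,
   |T_{e,r}|, |T_{k,r}| and, thanks to the reverse triplets of an augmented
   KG, |T_{k,r^{-1}}| (the counting lemmas of section Counting).  This
   rewrites the stationarity right-hand side as a linear combination of all
   entities whose coefficients are the unnormalised entries of row e of
   Lambda ([stationary_sum_expand]), so x_i = sum_k lambda_{i,k} x_k
   ([stationary_row_combination]), i.e. Lambda X = X as matrices
   ([row_combination_mulmx]).  Since Omega = X Y^T ([sim_mxE]),
   Lambda Omega Lambda'^T = (Lambda X)(Lambda' Y)^T = Omega. *)

Lemma sum_by_fibres {R : pzRingType} {V : lmodType R} {U J : finType}
    (A : {set U}) (g : U -> J) (F : J -> V) :
  \sum_(t in A) F (g t) = \sum_(j : J) #|[set t in A | g t == j]|%:R *: F j.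
Proof.
rewrite (partition_big g predT) //=; apply: eq_bigr => j _.
rewrite (eq_bigr (fun _ => F j)); last by move=> t /andP[_ /eqP->].
rewrite (eq_bigl (fun t => t \in [set t in A | g t == j])); last by move=> t; rewrite inE.
by rewrite sumr_const scaler_nat.
Qed.

Section Counting.
Variables (E B : finType).

Lemma card_Te_object (T : {set E * Defs.rel B * E}) (e k : E) :
  #|[set t in T_e T e | t.2 == k]| = #|Rset T e k|.
Proof.
rewrite -[RHS](card_imset _ (f := fun r => (e, r, k))); last by move=> r1 r2 [].
apply: eq_card => -[[s r] o]; apply/idP/imsetP.
- rewrite !inE /= => /andP[/andP[sro_T /eqP sE] /eqP oE].
  by subst s o; exists r; rewrite ?inE.
- by case=> r'; rewrite !inE => r'_T [-> -> ->] /=; rewrite r'_T !eqxx.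
Qed.

Lemma card_Te_relation (T : {set E * Defs.rel B * E}) (e : E) (r : Defs.rel B) :
  #|[set t in T_e T e | t.1.2 == r]| = #|T_er T e r|.
Proof. by apply: eq_card => t; rewrite !inE andbA. Qed.

Lemma card_Tr_subject (T : {set E * Defs.rel B * E}) (r : Defs.rel B) (k : E) :
  #|[set t in T_r T r | t.1.1 == k]| = #|T_er T k r|.
Proof. by apply: eq_card => t; rewrite !inE -andbA [(_ == r) && _]andbC. Qed.

(* In an augmented KG every triplet (s,r,o) comes with its reverse
   (o,r^{-1},s); this bijection identifies the triplets of T_r with object k
   with T_{k,r^{-1}}. *)
Lemma card_Tr_object (T0 : {set E * B * E}) (r : Defs.rel B) (k : E) :
  #|[set t in T_r (augment T0) r | t.2 == k]| = #|T_er (augment T0) k (Defs.inv r)|.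
Proof.
pose rev (t : E * Defs.rel B * E) := (t.2, Defs.inv t.1.2, t.1.1).
have revK : involutive rev by case=> [[s [r0 b]] o]; rewrite /rev /Defs.inv /= negbK.
rewrite -[RHS](card_imset _ (inv_inj revK)).
apply: eq_card => -[[s r'] o]; apply/idP/imsetP; case: r => r0 b.
- rewrite !inE /= => /andP[/andP[sro_T /eqP r'E] /eqP oE]; subst r' o.
  exists (k, Defs.inv (r0, b), s); last by rewrite /rev /Defs.inv /= negbK.
  by rewrite !inE /= !eqxx; case: b sro_T => /= ->.
- case=> -[[s' r''] o']; rewrite !inE /= => /andP[sro_T /andP[/eqP sE /eqP rE]].
  subst s' r'' => -[-> -> ->].
  by rewrite /Defs.inv /= negbK !eqxx andbT; case: b sro_T => /= ->.
Qed.

End Counting.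

Section StationaryExpansion.
Variables (R : realFieldType) (V : lmodType R) (E B : finType).
Variables (T0 : {set E * B * E}) (F : E -> V).
Local Notation T := (augment T0).

Lemma relation_translation_sum (r : Defs.rel B) :
  \sum_(t in T_r T r) (F t.2 - F t.1.1) =
  \sum_(k : E) (#|T_er T k (Defs.inv r)|%:R - #|T_er T k r|%:R) *: F k.
Proof.
rewrite sumrB (sum_by_fibres _ (fun t => t.2)) (sum_by_fibres _ (fun t => t.1.1)).
by rewrite -sumrB; apply: eq_bigr => k _; rewrite card_Tr_object card_Tr_subject scalerBl.
Qed.

Lemma stationary_sum_expand (e : E) :
  \sum_(t in T_e T e)
     (F t.2 - (#|T_r T t.1.2|%:R)^-1 *:
                \sum_(t' in T_r T t.1.2) (F t'.2 - F t'.1.1)) =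
  \sum_(k : E)
     (#|Rset T e k|%:R +
      \sum_(r : Defs.rel B) (#|T_er T e r|%:R / #|T_r T r|%:R) *
                            (#|T_er T k r|%:R - #|T_er T k (Defs.inv r)|%:R)) *: F k.
Proof.
have objects : \sum_(t in T_e T e) F t.2 = \sum_(k : E) #|Rset T e k|%:R *: F k.
  by rewrite (sum_by_fibres _ (fun t => t.2)); apply: eq_bigr => k _; rewrite card_Te_object.
have relations :
    \sum_(t in T_e T e) (#|T_r T t.1.2|%:R)^-1 *:
                        \sum_(t' in T_r T t.1.2) (F t'.2 - F t'.1.1) =
    \sum_(k : E) (\sum_(r : Defs.rel B) (#|T_er T e r|%:R / #|T_r T r|%:R) *
                  (#|T_er T k (Defs.inv r)|%:R - #|T_er T k r|%:R)) *: F k.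
  rewrite (sum_by_fibres _ (fun t => t.1.2)
             (fun r => (#|T_r T r|%:R)^-1 *: \sum_(t' in T_r T r) (F t'.2 - F t'.1.1))).
  under [RHS]eq_bigr do rewrite scaler_suml.
  rewrite exchange_big /=; apply: eq_bigr => r _.
  rewrite card_Te_relation relation_translation_sum !scaler_sumr.
  by apply: eq_bigr => k _; rewrite !scalerA.
rewrite sumrB objects relations -sumrB; apply: eq_bigr => k _.
rewrite -scalerBl -sumrN; congr ((_ + _) *: _); apply: eq_bigr => r _.
by rewrite -mulrN opprB.
Qed.

End StationaryExpansion.

Lemma stationary_row_combination {R : realFieldType} {n d : nat} {B : finType}
    {T0 : {set 'I_n * B * 'I_n}} {X : 'M[R]_(n, d)} :
  (forall i, T_e (augment T0) i != set0) -> stationary (augment T0) X ->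
  forall i, row i X = \sum_(k < n) lambda_mx R (augment T0) i k *: row k X.
Proof.
move=> nonempty st i; rewrite {1}(st i (nonempty i)).
rewrite (@stationary_sum_expand _ _ _ _ T0 (fun k => row k X)) scaler_sumr.
by apply: eq_bigr => k _; rewrite mxE scalerA.
Qed.

Lemma row_combination_mulmx {R : pzRingType} {p d : nat}
    {L : 'M[R]_p} {Z : 'M[R]_(p, d)} :
  (forall i, row i Z = \sum_(k < p) L i k *: row k Z) -> L *m Z = Z.
Proof.
move=> comb; apply/row_matrixP => i.
by rewrite row_mul mulmx_sum_row comb; apply: eq_bigr => k _; rewrite mxE.
Qed.

Lemma sim_mxE (R : realFieldType) (n m d : nat) (X : 'M[R]_(n, d)) (Y : 'M[R]_(m, d)) :
  sim_mx X Y = X *m Y^T.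
Proof. by apply/matrixP => i j; rewrite !mxE; apply: eq_bigr => k _; rewrite mxE. Qed.

Theorem theorem1 (R : realFieldType) (n m d : nat) (Bx By : finType)
    (T0x : {set 'I_n * Bx * 'I_n}) (T0y : {set 'I_m * By * 'I_m})
    (X : 'M[R]_(n, d)) (Y : 'M[R]_(m, d)) :
  (forall i : 'I_n, T_e (augment T0x) i != set0) ->
  (forall j : 'I_m, T_e (augment T0y) j != set0) ->
  stationary (augment T0x) X ->
  stationary (augment T0y) Y ->
  let L : 'M[R]_n := lambda_mx R (augment T0x) in
  let L' : 'M[R]_m := lambda_mx R (augment T0y) in
  let Om := sim_mx X Y in
  [/\ (forall i : 'I_n, row i X = \sum_(k < n) L i k *: row k X),
      (forall j : 'I_m, row j Y = \sum_(l < m) L' j l *: row l Y) &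
      L *m Om *m L'^T = Om].
Proof.
move=> nonempty_x nonempty_y stat_x stat_y L L' Om.
have comb_x := stationary_row_combination nonempty_x stat_x.
have comb_y := stationary_row_combination nonempty_y stat_y.
have LX : L *m X = X := row_combination_mulmx comb_x.
have LY : L' *m Y = Y := row_combination_mulmx comb_y.
split=> //.
by rewrite /Om sim_mxE mulmxA LX -mulmxA -trmx_mul LY.
Qed.
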